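(* Let $\mathcal{H}$ be a separable Hilbert space, $\epsilon_1,\ldots,\epsilon_n$ $\mathcal{H}$-valued random elements with $E\|\epsilon_i\|^2<\infty$, $W_{n1},\ldots,W_{nn}\ge0$ deterministic weights, $\eta_i=W_{ni}\epsilon_i$, $S_n=\sum_{i=1}^n\eta_i$, $\mathcal{G}_i=\sigma(\epsilon_1,\ldots,\epsilon_i)$ ($\mathcal{G}_0$ trivial), and $m\ge1$ an integer. For $1\le i\le n$ let $T_i=S_n-\sum_{j=i}^{\min(i+m-1,n)}\eta_j$ and $d_i=E[\|S_n\|\mid\mathcal{G}_i]-E[\|S_n\|\mid\mathcal{G}_{i-1}]-E[\|T_i\|\mid\mathcal{G}_i]+E[\|T_i\|\mid\mathcal{G}_{i-1}]$. Then $|d_i|\le\sum_{j=i}^{i+m-1}E(\|\eta_j\|\mid\mathcal{G}_i)+\sum_{j=i}^{i+m-1}E(\|\eta_j\|\mid\mathcal{G}_{i-1})$ and $E(d_i^2\mid\mathcal{G}_{i-1})\le m\sum_{j=i}^{i+m-1}E(\|\eta_j\|^2\mid\mathcal{G}_{i-1})$, where sums over $j$ are truncated at $n$. *)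

From HB Require Import structures.
From mathcomp Require Import all_boot all_order all_algebra.
From mathcomp Require Import all_classical all_reals all_analysis.
Set Implicit Arguments. Unset Strict Implicit. Unset Printing Implicit Defensive.
Import Order.TTheory GRing.Theory Num.Theory.
Import numFieldNormedType.Exports.
Local Open Scope classical_set_scope.
Local Open Scope ring_scope.

Definition norm_from_inner_product (R : realType) (H : normedModType R)
  (ip : H -> H -> R) : Prop :=
  [/\ forall x y, ip x y = ip y x,
      forall (a : R) (x y z : H), ip (a *: x + y) z = a * ip x z + ip y z
    & forall x : H, `|x| ^+ 2 = ip x x].

Definition separable_hilbert (R : realType) (H : completeNormedModType R) : Prop :=
  (exists ip : H -> H -> R, norm_from_inner_product ip) /\
  (exists D : set H, countable D /\ closure D = setT).

Definition borelH (R : realType) (H : normedModType R) : set (set H) :=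
  <<s [set: H], [set U | open U] >>.

Definition random_element (d : measure_display) (T : measurableType d)
  (R : realType) (H : normedModType R) (X : T -> H) : Prop :=
  forall B, borelH B -> measurable (X @^-1` B).

(* sigma(eps_1, ..., eps_i); for i = 0 this is the trivial sigma-algebra. *)
Definition natural_filtration (d : measure_display) (T : measurableType d)
  (R : realType) (H : normedModType R) (eps : nat -> T -> H) (i : nat)
  : set (set T) :=
  <<s [set: T], [set A | exists j B, [/\ (1 <= j <= i)%N, borelH B &
                                         A = eps j @^-1` B] ] >>.

Definition is_cond_exp (d : measure_display) (T : measurableType d)
  (R : realType) (P : probability T R) (G : set (set T)) (X Y : T -> R) : Prop :=
  [/\ forall B : set R, measurable B -> G (Y @^-1` B),
      P.-integrable [set: T] (EFin \o Y)
    & forall A, G A ->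
        (\int[P]_(x in A) (Y x)%:E = \int[P]_(x in A) (X x)%:E)%E].

From HB Require Import structures.
From mathcomp Require Import all_boot all_order all_algebra.
From mathcomp Require Import all_classical all_reals all_analysis.
From mathcomp Require Import ring lra measurable_realfun.
Import Order.TTheory GRing.Theory Num.Theory.
Import numFieldNormedType.Exports.
Local Open Scope classical_set_scope.
Local Open Scope ring_scope.
Set Implicit Arguments. Unset Strict Implicit. Unset Printing Implicit Defensive.

(* Write [d_i = U - V] with [U = E[X | G_i]], [V = E[X | G_(i-1)]] and
   [X = |S_n| - |T_i|]; by the triangle inequality [|X|] is at most the sum of
   the [|eta_j|] over the window [i <= j < min(i + m, n + 1)], so the first
   bound is monotonicity of conditional expectation. For the second,
   [V = E[U | G_(i-1)]] by the tower property, and conditional Pythagoras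
   gives [E[(U - V)^2 | G_(i-1)] <= E[U^2 | G_(i-1)] <= E[X^2 | G_(i-1)]],
   while [X^2 <= m * sum_j |eta_j|^2] by Cauchy-Schwarz. Separability of H is
   only used to make sums of H-valued random elements measurable. *)

Lemma two_mul_sum_le (R : realFieldType) (I : Type) (s : seq I) (f : I -> R) (a : R) :
  2 * a * (\sum_(j <- s) f j) <= (size s)%:R * a ^+ 2 + \sum_(j <- s) f j ^+ 2.
Proof.
elim: s => [|j s ih]; first by rewrite !big_nil mulr0 mul0r addr0.
rewrite !big_cons /= -natr1; have := sqr_ge0 (a - f j).
rewrite !expr2 in ih *; nra.
Qed.

Lemma sqr_sum_le_size_sum_sqr (R : realFieldType) (I : Type) (s : seq I) (f : I -> R) :
  (\sum_(j <- s) f j) ^+ 2 <= (size s)%:R * \sum_(j <- s) f j ^+ 2.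
Proof.
elim: s => [|j s ih]; first by rewrite !big_nil expr2 mulr0.
rewrite !big_cons /= -natr1; have := two_mul_sum_le s f (f j).
rewrite !expr2 in ih *; nra.
Qed.

Lemma sqr_le_mul_sum_sqr (R : realFieldType) (I : Type) (s : seq I) (f : I -> R)
  (x : R) (m : nat) : `|x| <= \sum_(j <- s) f j -> (size s <= m)%N ->
  x ^+ 2 <= m%:R * \sum_(j <- s) f j ^+ 2.
Proof.
move=> xf sm; apply: (@le_trans _ _ ((\sum_(j <- s) f j) ^+ 2)).
  by move: xf; rewrite ler_norml => /andP[lo hi]; rewrite !expr2; nra.
apply: le_trans (sqr_sum_le_size_sum_sqr s f) _.
by apply: ler_wpM2r; [apply: sumr_ge0 => j _; exact: sqr_ge0|rewrite ler_nat].
Qed.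

Lemma norm_dist_sub_sum_le (R : numDomainType) (V : normedZmodType R)
  (I : Type) (s : seq I) (u : V) (v : I -> V) :
  `| `|u| - `|u - \sum_(j <- s) v j| | <= \sum_(j <- s) `|v j|.
Proof.
apply: le_trans (ler_dist_dist _ _) _.
by rewrite opprB addrC subrK; exact: ler_norm_sum.
Qed.

Section borel_measurable.
Context d (T : measurableType d) (R : realType) (H : normedModType R).

Definition borel_measurable (f : T -> H) :=
  forall U : set H, open U -> measurable (f @^-1` U).

Lemma random_element_borel_measurable (f : T -> H) :
  random_element f -> borel_measurable f.
Proof. by move=> rf U oU; apply: rf; exact: sub_gen_smallest. Qed.

Lemma borel_measurable_cst (v : H) : borel_measurable (fun=> v).
Proof. by move=> U _; rewrite preimage_cst; case: ifP. Qed.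

Lemma borel_measurableZ (c : R) (f : T -> H) :
  borel_measurable f -> borel_measurable (fun x => c *: f x).
Proof.
move=> mf U oU; apply: (mf ((fun v : H => c *: v) @^-1` U)).
by apply: open_comp => // v _; exact: scaler_continuous.
Qed.

Lemma countable_dense_seq (D : set H) : countable D -> closure D = setT ->
  exists e : nat -> H, forall y r, 0 < r -> exists k, `|y - e k| < r.
Proof.
move=> /pcard_surjP [e he] clD; exists e => y r r0.
have : closure D y by rewrite clD.
move=> /(_ (ball y r) (nbhsx_ballx _ _ r0)) [z [Dz yz]].
have [k _ ekz] := he z Dz.
by exists k; move: yz; rewrite -ball_normE /= -ekz.
Qed.

(* A sum of Borel maps is Borel as soon as H is separable: the preimage of an
   open set is a countable union over pairs of balls with centres in a dense
   sequence and radii [1/(k+1)]. *)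
Lemma borel_measurableD (D : set H) (f g : T -> H) :
  countable D -> closure D = setT ->
  borel_measurable f -> borel_measurable g -> borel_measurable (fun x => f x + g x).
Proof.
move=> cD clD mf mg U oU.
have [e he] := countable_dense_seq cD clD.
pose r (k : nat) : R := k.+1%:R^-1.
have r_gt0 k : 0 < r k by rewrite invr_gt0.
pose piece a b k := [set x | ball (e a + e b) (2 * r k) `<=` U /\
  `|e a - f x| < r k /\ `|e b - g x| < r k].
have -> : (fun x => f x + g x) @^-1` U = \bigcup_a \bigcup_b \bigcup_k piece a b k.
  apply/seteqP; split => x /=.
  - move=> Ux; have : nbhs (f x + g x) U by apply: open_nbhs_nbhs.
    move=> /nbhs_ballP [eps eps_gt0 epsU].
    have [k rk] : exists k, 4 * r k < eps.
      exists (Num.truncn (4 / eps)); rewrite /r.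
      rewrite -ltr_pdivlMr ?invr_gt0 // invrK -ltr_pdivrMl // mulrC.
      exact: Num.Theory.truncnS_gt.
    have [a ha] := he (f x) (r k) (r_gt0 k).
    have [b hb] := he (g x) (r k) (r_gt0 k).
    exists a => //; exists b => //; exists k => //.
    split; last by rewrite !(distrC (e _)).
    move=> z; rewrite -ball_normE /= => zk; apply: epsU; rewrite -ball_normE /=.
    have -> : f x + g x - z = (f x - e a) + (g x - e b) + (e a + e b - z).
      by rewrite [in RHS](addrACA (f x)) -opprD [in RHS]addrA subrK.
    rewrite (le_lt_trans (ler_normD _ _)) //.
    rewrite (le_lt_trans (lerD (ler_normD _ _) (lexx _))) //.
    apply: lt_trans rk; have -> : 4 * r k = r k + r k + 2 * r k by lra.
    by rewrite !ltrD.
  - move=> [a _ [b _ [k _ [abU [ha hb]]]]]; apply: abU; rewrite -ball_normE /=.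
    have -> : e a + e b - (f x + g x) = (e a - f x) + (e b - g x).
      by rewrite opprD addrACA.
    by rewrite (le_lt_trans (ler_normD _ _)) // mulr2n mulrDl mul1r ltrD.
apply: bigcupT_measurable => a; apply: bigcupT_measurable => b.
apply: bigcupT_measurable => k.
have [abU|abU] := pselect (ball (e a + e b) (2 * r k) `<=` U); last first.
  by rewrite (_ : piece a b k = set0) //; apply/seteqP; split => x // [].
have -> : piece a b k = f @^-1` ball (e a) (r k) `&` g @^-1` ball (e b) (r k).
  by apply/seteqP; split => x /=; rewrite -!ball_normE /=; [case=> _ []|case].
by apply: measurableI; [apply: mf|apply: mg]; exact: ball_open.
Qed.

Lemma borel_measurable_sum (D : set H) (I : eqType) (s : seq I) (F : I -> T -> H) :
  countable D -> closure D = setT -> {in s, forall j, borel_measurable (F j)} ->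
  borel_measurable (fun x => \sum_(j <- s) F j x).
Proof.
move=> cD clD; elim: s => [|j s ih] mF.
  by under eq_fun do rewrite big_nil; exact: borel_measurable_cst.
under eq_fun do rewrite big_cons.
apply: (borel_measurableD cD clD); first by apply: mF; rewrite mem_head.
by apply: ih => k ks; apply: mF; rewrite in_cons ks orbT.
Qed.

Lemma measurable_norm (f : T -> H) :
  borel_measurable f -> measurable_fun setT (fun x => `|f x|).
Proof.
move=> mf _; apply: (measurability _ (RGenOInfty.measurableE R)) => //.
move=> /= _ [_ [r ->] <-]; rewrite setTI.
have -> : (fun x => `|f x|) @^-1` `]r, +oo[%classic =
    f @^-1` ((fun v : H => `|v|) @^-1` `]r, +oo[%classic) by [].
apply: mf; apply: open_comp; last exact: interval_open.
by move=> v _; exact: norm_continuous.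
Qed.

End borel_measurable.

Section staircase.
Variable R : realType.
Implicit Types (dl t : R) (N : nat).

Definition nsteps dl t N : nat :=
  (\sum_(0 <= j < N) nat_of_bool (j.+1%:R * dl <= t)%R)%N.

Definition grid_floor dl N t : R := (nsteps dl t N)%:R * dl.

Lemma nsteps_spec dl t N : 0 < dl ->
  [/\ (nsteps dl t N <= N)%N, nsteps dl t N = 0%N \/ grid_floor dl N t <= t
    & nsteps dl t N = N \/ t < grid_floor dl N t + dl].
Proof.
rewrite /grid_floor => dl_gt0; elim: N => [|N [leN low up]].
  by rewrite /nsteps big_geq //; split => //; left.
rewrite /nsteps big_nat_recr //= -/(nsteps dl t N).
case: (leP (N.+1%:R * dl) t) => tN /=.
- have -> : nsteps dl t N = N.
    case: up => // tlt; apply/eqP; rewrite eqn_leq leN /= leqNgt; apply/negP.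
    rewrite -(ler_nat R) -(ler_pM2r dl_gt0) => le_nN.
    have : N%:R * dl < N.+1%:R * dl by rewrite ltr_pM2r // ltr_nat.
    move: le_nN; rewrite -!natr1 !mulrDl !mul1r; lra.
  by rewrite addn1; split => //; [right|left].
- rewrite addn0; split => //; first exact: leqW.
  case: up => [->|]; right => //.
  by rewrite -natr1 mulrDl mul1r in tN.
Qed.

Lemma grid_floor_ge0 dl N t : 0 < dl -> 0 <= grid_floor dl N t.
Proof. by move=> dl_gt0; rewrite mulr_ge0 // ltW. Qed.

Lemma grid_floor_le_top dl N t : 0 < dl -> grid_floor dl N t <= N%:R * dl.
Proof.
by move=> dl_gt0; case: (nsteps_spec t N dl_gt0); rewrite ler_pM2r // ler_nat.
Qed.

Lemma grid_floor_le dl N t : 0 < dl -> 0 <= t -> grid_floor dl N t <= t.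
Proof.
move=> dl_gt0 t_ge0; case: (nsteps_spec t N dl_gt0) => _ [n0|//] _.
by rewrite /grid_floor n0 mul0r.
Qed.

Lemma grid_floor_nonpos dl N t : 0 < dl -> t <= 0 -> grid_floor dl N t = 0.
Proof.
move=> dl_gt0 t_le0; apply/eqP; rewrite eq_le grid_floor_ge0 // andbT.
case: (nsteps_spec t N dl_gt0) => _ [n0|h] _; last exact: le_trans t_le0.
by rewrite /grid_floor n0 mul0r.
Qed.

Lemma grid_floor_gap dl N t : 0 < dl ->
  grid_floor dl N t = N%:R * dl \/ t < grid_floor dl N t + dl.
Proof.
move=> dl_gt0; have [_ _] := nsteps_spec t N dl_gt0.
by rewrite /grid_floor => -[->|]; [left|right].
Qed.

Lemma grid_floor_mono dl N : 0 < dl -> {homo grid_floor dl N : s t / s <= t}.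
Proof.
move=> dl_gt0 s t st; rewrite ler_pM2r // ler_nat.
by apply: leq_sum => j _; case: (leP _ s) => //= h; rewrite (le_trans h st).
Qed.

Lemma grid_floor_close dl N t : 0 < dl -> 0 <= t <= N%:R * dl ->
  `|t - grid_floor dl N t| <= dl.
Proof.
move=> dl_gt0 /andP [t_ge0 t_le]; rewrite ler_norml.
have := grid_floor_le N dl_gt0 t_ge0.
by case: (grid_floor_gap N t dl_gt0) => [->|] *; apply/andP; split; lra.
Qed.

(* [staircase k] rounds towards zero to the grid of step [1/(k+1)], clipped
   to [[-(k+1), k+1]]. *)
Definition staircase (k : nat) (y : R) : R :=
  grid_floor k.+1%:R^-1 (k.+1 ^ 2) y - grid_floor k.+1%:R^-1 (k.+1 ^ 2) (- y).

Lemma staircase_step_gt0 (k : nat) : 0 < (k.+1%:R : R)^-1.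
Proof. by rewrite invr_gt0 ltr0n. Qed.

Lemma staircase_top (k : nat) : (k.+1 ^ 2)%:R * (k.+1%:R : R)^-1 = k.+1%:R.
Proof. by rewrite natrX expr2 mulrK // unitfE pnatr_eq0. Qed.

Lemma staircase_mono k : {homo staircase k : s t / s <= t}.
Proof.
have dl_gt0 := staircase_step_gt0 k.
by move=> s t st; rewrite lerB ?grid_floor_mono // lerN2.
Qed.

Lemma measurable_staircase k : measurable_fun setT (staircase k).
Proof. exact: nondecreasing_measurable (staircase_mono k). Qed.

Lemma staircase_ge0 k y : 0 <= y ->
  staircase k y = grid_floor k.+1%:R^-1 (k.+1 ^ 2) y.
Proof.
move=> y_ge0; have dl_gt0 := staircase_step_gt0 k.
by rewrite /staircase [X in _ - X]grid_floor_nonpos ?subr0 ?oppr_le0.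
Qed.

Lemma staircase_le0 k y : y <= 0 ->
  staircase k y = - grid_floor k.+1%:R^-1 (k.+1 ^ 2) (- y).
Proof.
move=> y_le0; have dl_gt0 := staircase_step_gt0 k.
by rewrite /staircase grid_floor_nonpos ?sub0r.
Qed.

Lemma staircase_mul_ge0 k y : 0 <= staircase k y * (y - staircase k y).
Proof.
have dl_gt0 := staircase_step_gt0 k.
have [y_ge0|/ltW y_le0] := leP 0 y.
  rewrite staircase_ge0 //.
  have := grid_floor_le (k.+1 ^ 2) dl_gt0 y_ge0.
  have := grid_floor_ge0 (k.+1 ^ 2) y dl_gt0; nra.
rewrite staircase_le0 //.
have := grid_floor_le (k.+1 ^ 2) dl_gt0 (_ : 0 <= - y); rewrite oppr_ge0 => /(_ y_le0).
have := grid_floor_ge0 (k.+1 ^ 2) (- y) dl_gt0; nra.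
Qed.

Lemma staircase_bound k y : `|staircase k y| <= k.+1%:R.
Proof.
have dl_gt0 := staircase_step_gt0 k; rewrite /staircase ler_norml.
have := grid_floor_le_top (k.+1 ^ 2) y dl_gt0.
have := grid_floor_le_top (k.+1 ^ 2) (- y) dl_gt0.
have := grid_floor_ge0 (k.+1 ^ 2) y dl_gt0.
have := grid_floor_ge0 (k.+1 ^ 2) (- y) dl_gt0.
rewrite staircase_top => *; apply/andP; split; lra.
Qed.

Lemma staircase_close k y : `|y| <= k.+1%:R ->
  `|y - staircase k y| <= k.+1%:R^-1.
Proof.
have dl_gt0 := staircase_step_gt0 k; move=> yk.
have [y_ge0|/ltW y_le0] := leP 0 y.
  rewrite staircase_ge0 //; apply: grid_floor_close => //.
  by rewrite staircase_top y_ge0 (le_trans (ler_norm y)).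
rewrite staircase_le0 // opprK -normrN opprD; apply: grid_floor_close => //.
by rewrite staircase_top oppr_ge0 y_le0 (le_trans _ yk) // -normrN ler_norm.
Qed.

Lemma staircase_cvg y : staircase k y @[k --> \oo] --> y.
Proof.
apply/cvgrPdist_le => eps eps_gt0.
exists (Num.truncn (`|y| + eps^-1)) => // k /= hk.
have := Num.Theory.truncnS_gt (`|y| + eps^-1).
have : (Num.truncn (`|y| + eps^-1)).+1%:R <= k.+1%:R :> R by rewrite ler_nat.
have := normr_ge0 y; have : 0 < eps^-1 by rewrite invr_gt0.
move=> *; apply: le_trans (staircase_close _) _; first lra.
by rewrite -[eps]invrK lef_pV2 ?posrE ?ltr0n ?invr_gt0 //; lra.
Qed.

End staircase.

Section EFin_integrals.
Context d (T : measurableType d) (R : realType) (mu : {measure set T -> \bar R}).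
Implicit Types (A : set T) (f g : T -> R).

Lemma integrable_EFinD f g : mu.-integrable setT (EFin \o f) ->
  mu.-integrable setT (EFin \o g) ->
  mu.-integrable setT (EFin \o (fun x => f x + g x)).
Proof.
by move=> fi gi; apply: eq_integrable (integrableD measurableT fi gi).
Qed.

Lemma integrable_EFinZ (k : R) f : mu.-integrable setT (EFin \o f) ->
  mu.-integrable setT (EFin \o (fun x => k * f x)).
Proof.
by move=> fi; apply: eq_integrable (integrableZl measurableT k fi).
Qed.

Lemma integrable_EFin_sum (I : eqType) (s : seq I) (F : I -> T -> R) :
  {in s, forall j, mu.-integrable setT (EFin \o F j)} ->
  mu.-integrable setT (EFin \o (fun x => \sum_(j <- s) F j x)).
Proof.
move=> iF; apply: eq_integrable (integrable_sum measurableT s iF) => //.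
by move=> x _ /=; rewrite -big_seq sumEFin.
Qed.

Lemma integrable_setT_sub A (h : T -> \bar R) : measurable A ->
  mu.-integrable setT h -> mu.-integrable A h.
Proof. by move=> mA; exact: integrableS measurableT mA (subsetT _). Qed.

Lemma integral_EFinD A f g : measurable A -> mu.-integrable setT (EFin \o f) ->
  mu.-integrable setT (EFin \o g) ->
  (\int[mu]_(x in A) (f x + g x)%:E =
   \int[mu]_(x in A) (f x)%:E + \int[mu]_(x in A) (g x)%:E)%E.
Proof.
move=> mA fi gi; under eq_integral do rewrite EFinD.
by apply: integralD_EFin => //; exact: integrable_setT_sub.
Qed.

Lemma integral_EFinB A f g : measurable A -> mu.-integrable setT (EFin \o f) ->
  mu.-integrable setT (EFin \o g) ->
  (\int[mu]_(x in A) (f x - g x)%:E =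
   \int[mu]_(x in A) (f x)%:E - \int[mu]_(x in A) (g x)%:E)%E.
Proof.
move=> mA fi gi; under eq_integral do rewrite EFinB.
by apply: integralB_EFin => //; exact: integrable_setT_sub.
Qed.

Lemma integral_EFinZ A (k : R) f : measurable A ->
  mu.-integrable setT (EFin \o f) ->
  (\int[mu]_(x in A) (k * f x)%:E = k%:E * \int[mu]_(x in A) (f x)%:E)%E.
Proof.
move=> mA fi; under eq_integral do rewrite EFinM.
by apply: integralZl => //; exact: integrable_setT_sub.
Qed.

End EFin_integrals.

Lemma integrable_EFin_measurable d (T : measurableType d) (R : realType)
  (mu : {measure set T -> \bar R}) (f : T -> R) :
  mu.-integrable setT (EFin \o f) -> measurable_fun setT f.
Proof. by move=> /measurable_int/measurable_EFinP. Qed.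

Lemma ge0_le_integral_EFin d (T : measurableType d) (R : realType)
  (mu : {measure set T -> \bar R}) (A : set T) (f g : T -> R) :
  measurable A -> measurable_fun setT f -> measurable_fun setT g ->
  (forall x, 0 <= f x) -> (forall x, f x <= g x) ->
  (\int[mu]_(x in A) (f x)%:E <= \int[mu]_(x in A) (g x)%:E)%E.
Proof.
move=> mA mf mg f_ge0 fg; apply: ge0_le_integral => //.
- by move=> x _; rewrite lee_fin.
- by apply/measurable_EFinP; exact: measurable_funS mf.
- by apply/measurable_EFinP; exact: measurable_funS mg.
- by move=> x _; rewrite lee_fin.
Qed.

Lemma limn_einf_le (R : realType) (v : (\bar R)^nat) (c : \bar R) :
  (forall n, (v n <= c)%E) -> (limn_einf v <= c)%E.
Proof.
move=> vc; rewrite limn_einf_lim; apply: lime_le; first exact: is_cvg_einfs.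
apply: nearW => n; apply: ge_ereal_inf; exists (v n) => //.
by exists n => //=.
Qed.

Lemma integrable_norm_dominated d (T : measurableType d) (R : realType)
  (mu : {measure set T -> \bar R}) (H : normedModType R) (f : T -> H) (g : T -> R) :
  borel_measurable f -> mu.-integrable setT (EFin \o g) -> (forall x, `|f x| <= g x) ->
  mu.-integrable setT (EFin \o (fun x => `|f x|)).
Proof.
move=> mf ig fg; apply: (le_integrable measurableT _ _ ig).
  exact/measurable_EFinP/measurable_norm.
by move=> x _ /=; rewrite lee_fin normr_id (le_trans (fg x)) // ler_norm.
Qed.

Lemma integrable_sqr_normZ d (T : measurableType d) (R : realType)
  (mu : {measure set T -> \bar R}) (H : normedModType R) (c : R) (f : T -> H) :
  mu.-integrable setT (EFin \o (fun x => `|f x| ^+ 2)) ->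
  mu.-integrable setT (EFin \o (fun x => `|c *: f x| ^+ 2)).
Proof.
move=> fi; apply: eq_integrable (integrable_EFinZ (c ^+ 2) fi) => // x _ /=.
by rewrite normrZ exprMn real_normK // num_real.
Qed.

Section conditional_expectation.
Context d (T : measurableType d) (R : realType) (P : probability T R).
Variable C : set (set T).
Hypothesis C_meas : C `<=` measurable.

Lemma sigma_gen_measurable : <<s C >> `<=` measurable.
Proof. by apply: smallest_sub => //; exact: sigma_algebra_measurable. Qed.

Definition gen_measurable (Y : T -> R) :=
  forall B : set R, measurable B -> <<s C >> (Y @^-1` B).

Lemma gen_measurableP Y :
  gen_measurable Y <-> measurable_fun [set: g_sigma_algebraType C] Y.
Proof.
split => [mY _ B mB|mY B mB]; first by rewrite setTI; exact: mY.
by have := mY measurableT B mB; rewrite setTI.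
Qed.

Lemma gen_measurable_measurable Y : gen_measurable Y -> measurable_fun setT Y.
Proof.
by move=> mY _ B mB; rewrite setTI; apply: sigma_gen_measurable; exact: mY.
Qed.

Lemma gen_measurable_cst k : gen_measurable (fun=> k).
Proof. by apply/gen_measurableP; exact: measurable_cst. Qed.

Lemma gen_measurableD Y1 Y2 : gen_measurable Y1 -> gen_measurable Y2 ->
  gen_measurable (fun x => Y1 x + Y2 x).
Proof.
move=> /gen_measurableP m1 /gen_measurableP m2.
by apply/gen_measurableP; exact: measurable_funD.
Qed.

Lemma gen_measurableB Y1 Y2 : gen_measurable Y1 -> gen_measurable Y2 ->
  gen_measurable (fun x => Y1 x - Y2 x).
Proof.
move=> /gen_measurableP m1 /gen_measurableP m2.
by apply/gen_measurableP; exact: measurable_funB.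
Qed.

Lemma gen_measurableZ k Y : gen_measurable Y -> gen_measurable (fun x => k * Y x).
Proof.
by move=> /gen_measurableP mY; apply/gen_measurableP; exact: measurable_funM.
Qed.

(* [is_cond_exp] alone does not require [X] to be integrable, which
   linearity needs. *)
Definition is_cexp (X Y : T -> R) :=
  is_cond_exp P <<s C >> X Y /\ P.-integrable setT (EFin \o X).

Lemma is_cexp_gen_measurable X Y : is_cexp X Y -> gen_measurable Y.
Proof. by case=> [[]]. Qed.

Lemma is_cexp_integrable X Y : is_cexp X Y -> P.-integrable setT (EFin \o Y).
Proof. by case=> [[]]. Qed.

Lemma is_cexp_integral X Y A : is_cexp X Y -> <<s C >> A ->
  (\int[P]_(x in A) (Y x)%:E = \int[P]_(x in A) (X x)%:E)%E.
Proof. by case=> [[_ _ eXY]] _; exact: eXY. Qed.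

Lemma is_cexp_integrable_sub X Y : is_cexp X Y ->
  P.-integrable setT (EFin \o (fun x => Y x - X x)).
Proof.
move=> hXY; have [_ iX] := hXY.
by apply: eq_integrable (integrableB measurableT (is_cexp_integrable hXY) iX).
Qed.

Lemma is_cexp0 : is_cexp (fun=> 0) (fun=> 0).
Proof.
have i0 : P.-integrable setT (EFin \o (fun=> 0 : R)).
  exact: finite_measure_integrable_cst.
by split => //; split => // B mB; exact: gen_measurable_cst.
Qed.

Lemma is_cexpD X1 Y1 X2 Y2 : is_cexp X1 Y1 -> is_cexp X2 Y2 ->
  is_cexp (fun x => X1 x + X2 x) (fun x => Y1 x + Y2 x).
Proof.
move=> [[mY1 iY1 eY1] iX1] [[mY2 iY2 eY2] iX2].
split; last exact: integrable_EFinD.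
split; [exact: gen_measurableD|exact: integrable_EFinD|].
move=> A GA; have mA := sigma_gen_measurable GA.
by rewrite !integral_EFinD // eY1 // eY2.
Qed.

Lemma is_cexpZ k X Y : is_cexp X Y -> is_cexp (fun x => k * X x) (fun x => k * Y x).
Proof.
move=> [[mY iY eY] iX].
split; last exact: integrable_EFinZ.
split; [exact: gen_measurableZ|exact: integrable_EFinZ|].
move=> A GA; have mA := sigma_gen_measurable GA.
by rewrite !integral_EFinZ // eY.
Qed.

Lemma is_cexpB X1 Y1 X2 Y2 : is_cexp X1 Y1 -> is_cexp X2 Y2 ->
  is_cexp (fun x => X1 x - X2 x) (fun x => Y1 x - Y2 x).
Proof.
move=> h1 h2; have := is_cexpD h1 (is_cexpZ (-1) h2).
by congr is_cexp; apply: funext => x; rewrite mulN1r.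
Qed.

Lemma is_cexp_sum (I : eqType) (s : seq I) (X Y : I -> T -> R) :
  {in s, forall j, is_cexp (X j) (Y j)} ->
  is_cexp (fun x => \sum_(j <- s) X j x) (fun x => \sum_(j <- s) Y j x).
Proof.
elim: s => [|j s ih] hs.
  under eq_fun do rewrite big_nil.
  by under [X in is_cexp _ X]eq_fun do rewrite big_nil; exact: is_cexp0.
under eq_fun do rewrite big_cons; under [X in is_cexp _ X]eq_fun do rewrite big_cons.
apply: is_cexpD; first by apply: hs; rewrite mem_head.
by apply: ih => k ks; apply: hs; rewrite in_cons ks orbT.
Qed.

Lemma gen_measurable_ae_le Z1 Z2 : gen_measurable Z1 -> gen_measurable Z2 ->
  P.-integrable setT (EFin \o Z1) -> P.-integrable setT (EFin \o Z2) ->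
  (forall A, <<s C >> A ->
     (\int[P]_(x in A) (Z1 x)%:E <= \int[P]_(x in A) (Z2 x)%:E)%E) ->
  {ae P, forall x, Z1 x <= Z2 x}.
Proof.
move=> m1 m2 i1 i2 le12; pose Z x := Z1 x - Z2 x.
pose B := Z @^-1` `]0, +oo[%classic.
have GB : <<s C >> B by apply: gen_measurableB => //; exact: measurable_itv.
have mB := sigma_gen_measurable GB.
have mZ : measurable_fun B (EFin \o Z).
  have mZT := gen_measurable_measurable (gen_measurableB m1 m2).
  by apply/measurable_EFinP; exact: measurable_funS mZT.
have intB0 : (\int[P]_(x in B) `|(EFin \o Z) x| = 0)%E.
  apply/eqP; rewrite eq_le; apply/andP; split; last first.
    by apply: integral_ge0 => x _; exact: abse_ge0.
  have -> : (\int[P]_(x in B) `|(EFin \o Z) x| = \int[P]_(x in B) (Z x)%:E)%E.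
    apply: eq_integral => x /set_mem; rewrite /B /= in_itv /= andbT => Zx.
    by rewrite gtr0_norm.
  by rewrite integral_EFinB // sube_le0; exact: le12.
apply: filterS ((ae_eq_integral_abs P mB mZ).1 intB0) => x Z0.
rewrite leNgt; apply/negP => lt21.
have Bx : B x by rewrite /B /= in_itv /= andbT subr_gt0.
by move: (Z0 Bx) => /= /eqP; rewrite eqe subr_eq0 => /eqP eq12; rewrite eq12 ltxx in lt21.
Qed.

Lemma is_cexp_le X1 Y1 X2 Y2 : is_cexp X1 Y1 -> is_cexp X2 Y2 ->
  (forall x, X1 x <= X2 x) -> {ae P, forall x, Y1 x <= Y2 x}.
Proof.
move=> h1 h2 le12; apply: gen_measurable_ae_le;
  [exact: is_cexp_gen_measurable h1|exact: is_cexp_gen_measurable h2|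
   exact: is_cexp_integrable h1|exact: is_cexp_integrable h2|].
move=> A GA; rewrite (is_cexp_integral h1 GA) (is_cexp_integral h2 GA).
have mA := sigma_gen_measurable GA; case: h1 h2 => _ i1 [_ i2].
apply: le_integral => //; [exact: integrable_setT_sub..|].
by move=> x _; rewrite lee_fin.
Qed.

Lemma is_cexp_indic_orth X Y A B : is_cexp X Y -> <<s C >> A -> <<s C >> B ->
  (\int[P]_(x in A) (\1_B x * (Y x - X x))%:E = 0)%E.
Proof.
move=> hXY GA GB; have [_ iX] := hXY.
have GAB : <<s C >> (A `&` B).
  exact: (@measurableI _ (g_sigma_algebraType C) A B GA GB).
have mA := sigma_gen_measurable GA; have mAB := sigma_gen_measurable GAB.
transitivity (\int[P]_(x in A `&` B) (Y x - X x)%:E)%E.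
  rewrite integral_mkcondr; apply: eq_integral => x _.
  by rewrite /patch indicE; case: ifP => _; rewrite ?mul1r ?mul0r.
rewrite integral_EFinB // ?(is_cexp_integrable hXY) // (is_cexp_integral hXY GAB).
by rewrite subee // integrable_fin_num // integrable_setT_sub.
Qed.

(* The staircase of [Y] is a finite combination of indicators of sets of
   [<<s C >>], to each of which [Y - X] is orthogonal. *)
Lemma is_cexp_staircase_orth X Y A k : is_cexp X Y -> <<s C >> A ->
  (\int[P]_(x in A) (staircase k (Y x) * (Y x - X x))%:E = 0)%E.
Proof.
move=> hXY GA; have mA := sigma_gen_measurable GA.
have mY := is_cexp_gen_measurable hXY; have iZ := is_cexp_integrable_sub hXY.
pose dl : R := k.+1%:R^-1.
pose up j := [set x | j.+1%:R * dl <= Y x].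
pose lo j := [set x | j.+1%:R * dl <= - Y x].
have G_up j : <<s C >> (up j).
  have -> : up j = Y @^-1` `[j.+1%:R * dl, +oo[%classic.
    by apply/seteqP; split => x /=; rewrite in_itv /= andbT.
  by apply: mY; exact: measurable_itv.
have G_lo j : <<s C >> (lo j).
  have -> : lo j = Y @^-1` `]-oo, - (j.+1%:R * dl)]%classic.
    by apply/seteqP; split => x /=; rewrite in_itv /= lerNr.
  by apply: mY; exact: measurable_itv.
have iB B : <<s C >> B ->
    P.-integrable setT (EFin \o (fun x => \1_B x * (Y x - X x))).
  move=> GB; apply: (le_integrable measurableT _ _ iZ).
    apply/measurable_EFinP; apply: measurable_funM.
      exact: measurable_indic (sigma_gen_measurable GB).
    exact: integrable_EFin_measurable iZ.
  move=> x _ /=; rewrite lee_fin normrM indicE.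
  by case: (_ \in _); rewrite ?normr1 ?normr0 ?mul1r ?mul0r.
pose f j x := (dl * (\1_(up j) x * (Y x - X x)) -
               dl * (\1_(lo j) x * (Y x - X x)))%:E.
have if_ j : P.-integrable A (f j).
  apply: integrable_setT_sub => //; rewrite /f.
  have := integrable_EFinD (integrable_EFinZ dl (iB _ (G_up j)))
    (integrable_EFinZ (-1) (integrable_EFinZ dl (iB _ (G_lo j)))).
  by apply: eq_integrable => // x _ /=; rewrite mulN1r.
have indicE_bool (p : T -> bool) x : \1_[set x | p x] x = (p x)%:R :> R.
  by rewrite indicE (_ : (x \in _) = p x) //; apply/idP/idP => [/set_mem|/mem_set].
transitivity (\int[P]_(x in A) (\sum_(j <- index_iota 0 (k.+1 ^ 2)) f j x))%E.
  apply: eq_integral => x _; rewrite /f sumEFin; congr EFin.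
  rewrite /staircase /grid_floor /nsteps !natr_sum mulrBl !mulr_suml -sumrB.
  by apply: eq_bigr => j _; rewrite !indicE_bool /dl; ring.
rewrite integral_sum //; apply: big1 => j _; rewrite /f.
have [iup ilo] := (iB _ (G_up j), iB _ (G_lo j)).
rewrite integral_EFinB ?integrable_EFinZ // !integral_EFinZ //.
by rewrite !is_cexp_indic_orth // mule0 subee.
Qed.

(* The cross term [2 q (Y - X)] integrates to zero, and
   [(X - q)^2 + q^2 <= X^2 + 2 q (Y - X)] because [0 <= q (Y - q)]. *)
Lemma integral_staircase_sqr_le X Y A k : is_cexp X Y -> <<s C >> A ->
  P.-integrable A (EFin \o (fun x => X x ^+ 2)) ->
  (\int[P]_(x in A) ((X x - staircase k (Y x)) ^+ 2 + staircase k (Y x) ^+ 2)%:E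
   <= \int[P]_(x in A) (X x ^+ 2)%:E)%E.
Proof.
move=> hXY GA iX2; have mA := sigma_gen_measurable GA.
have mY := gen_measurable_measurable (is_cexp_gen_measurable hXY).
have [_ /integrable_EFin_measurable mX] := hXY.
have iZ := is_cexp_integrable_sub hXY.
have mZ := integrable_EFin_measurable iZ.
pose q x := staircase k (Y x).
have mq : measurable_fun setT q := measurableT_comp (measurable_staircase k) mY.
have iqZ : P.-integrable setT (EFin \o (fun x => q x * (Y x - X x))).
  apply: (le_integrable measurableT _ _ (integrable_EFinZ k.+1%:R iZ)).
    by apply/measurable_EFinP; exact: measurable_funM.
  move=> x _ /=; rewrite lee_fin normrM [`|k.+1%:R * _|]normrM.
  by rewrite (ger0_norm (ler0n _ _)) ler_wpM2r // staircase_bound.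
apply: (@le_trans _ _ (\int[P]_(x in A) (X x ^+ 2 + 2 * (q x * (Y x - X x)))%:E)%E).
  apply: ge0_le_integral_EFin => //.
  - by apply: measurable_funD; apply: measurable_funX => //; exact: measurable_funB.
  - apply: measurable_funD; first exact: measurable_funX.
    by apply: measurable_funM => //; exact: measurable_funM.
  - by move=> x; rewrite addr_ge0 ?sqr_ge0.
  - move=> x; rewrite -subr_ge0.
    have expand (a b c : R) :
        a ^+ 2 + 2 * (c * (b - a)) - ((a - c) ^+ 2 + c ^+ 2) = 2 * (c * (b - c)).
      by ring.
    by rewrite expand mulr_ge0 // staircase_mul_ge0.
under eq_integral do rewrite EFinD.
have -> := integralD_EFin mA iX2 (integrable_setT_sub mA (integrable_EFinZ 2 iqZ)).
by rewrite integral_EFinZ // is_cexp_staircase_orth // mule0 adde0.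
Qed.

(* Fatou's lemma along the staircases of [Y]; [X] need not be square
   integrable. *)
Lemma integral_sqr_cexp_le X Y A : is_cexp X Y -> <<s C >> A ->
  (\int[P]_(x in A) ((X x - Y x) ^+ 2 + Y x ^+ 2)%:E <=
   \int[P]_(x in A) (X x ^+ 2)%:E)%E.
Proof.
move=> hXY GA; have mA := sigma_gen_measurable GA.
have mY := gen_measurable_measurable (is_cexp_gen_measurable hXY).
have [_ /integrable_EFin_measurable mX] := hXY.
have [->|X2_fin] := eqVneq (\int[P]_(x in A) (X x ^+ 2)%:E)%E +oo%E.
  exact: leey.
have iX2 : P.-integrable A (EFin \o (fun x => X x ^+ 2)).
  apply/integrableP; split.
    by apply/measurable_EFinP; apply: measurable_funS (measurable_funX 2 mX).
  rewrite (@eq_integral _ _ _ _ _ (fun x => (X x ^+ 2)%:E)); first by rewrite ltey.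
  by move=> x _ /=; rewrite ger0_norm // sqr_ge0.
pose h k x := (((X x - staircase k (Y x)) ^+ 2 + staircase k (Y x) ^+ 2)%:E : \bar R).
have mh k : measurable_fun A (h k).
  have mq := measurableT_comp (measurable_staircase k) mY.
  apply/measurable_EFinP; apply: measurable_funS (_ : measurable_fun setT _) => //.
  by apply: measurable_funD; apply: measurable_funX => //; exact: measurable_funB.
have h_ge0 k x : A x -> (0 <= h k x)%E.
  by move=> _; rewrite lee_fin addr_ge0 ?sqr_ge0.
have h_cvg x : h k x @[k --> \oo] --> (((X x - Y x) ^+ 2 + Y x ^+ 2)%:E : \bar R).
  apply: cvg_EFin; first exact: nearW.
  rewrite /h !expr2; have q_cvg := staircase_cvg (y := Y x).
  by apply: cvgD; [apply: cvgM; apply: cvgB => //; exact: cvg_cst|exact: cvgM].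
rewrite (eq_integral (fun x => limn_einf (h^~ x))); last first.
  move=> x _; rewrite is_cvg_limn_einfE; last by apply/cvg_ex; eexists; exact: h_cvg.
  by rewrite (cvg_lim _ (h_cvg x)).
apply: le_trans (fatou P mA mh h_ge0) _; apply: limn_einf_le => k.
exact: integral_staircase_sqr_le.
Qed.

Lemma integral_sqr_cexp_le_sqr X Y A : is_cexp X Y -> <<s C >> A ->
  (\int[P]_(x in A) (Y x ^+ 2)%:E <= \int[P]_(x in A) (X x ^+ 2)%:E)%E.
Proof.
move=> hXY GA; apply: le_trans (integral_sqr_cexp_le hXY GA).
have mY := gen_measurable_measurable (is_cexp_gen_measurable hXY).
have [_ /integrable_EFin_measurable mX] := hXY.
apply: ge0_le_integral_EFin; [exact: sigma_gen_measurable|exact: measurable_funX| | |].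
- by apply: measurable_funD; apply: measurable_funX => //; exact: measurable_funB.
- by move=> x; rewrite sqr_ge0.
- by move=> x; rewrite lerDr sqr_ge0.
Qed.

Lemma integral_sqr_sub_cexp_le X Y A : is_cexp X Y -> <<s C >> A ->
  (\int[P]_(x in A) ((X x - Y x) ^+ 2)%:E <= \int[P]_(x in A) (X x ^+ 2)%:E)%E.
Proof.
move=> hXY GA; apply: le_trans (integral_sqr_cexp_le hXY GA).
have mY := gen_measurable_measurable (is_cexp_gen_measurable hXY).
have [_ /integrable_EFin_measurable mX] := hXY.
apply: ge0_le_integral_EFin; [exact: sigma_gen_measurable| | | |].
- by apply: measurable_funX; exact: measurable_funB.
- by apply: measurable_funD; apply: measurable_funX => //; exact: measurable_funB.
- by move=> x; rewrite sqr_ge0.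
- by move=> x; rewrite lerDl sqr_ge0.
Qed.

End conditional_expectation.

Lemma is_cexp_tower d (T : measurableType d) (R : realType) (P : probability T R)
  (C C' : set (set T)) (X U V : T -> R) : <<s C' >> `<=` <<s C >> ->
  is_cexp P C' X V -> is_cexp P C X U -> is_cexp P C' U V.
Proof.
move=> C'C [[mV iV eV] _] hU; split; last exact: is_cexp_integrable hU.
by split => // A GA; rewrite eV // (is_cexp_integral hU (C'C _ GA)).
Qed.

Section cexp_increments.
Context d (T : measurableType d) (R : realType) (P : probability T R).
Variables C0 C1 : set (set T).
Hypotheses (C0_meas : C0 `<=` measurable) (C1_meas : C1 `<=` measurable).
Hypothesis C01 : <<s C0 >> `<=` <<s C1 >>.
Variables X U V : T -> R.
Hypotheses (XU : is_cexp P C1 X U) (XV : is_cexp P C0 X V).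

Lemma cexp_increment_abs_le (s A B : T -> R) : (forall x, `|X x| <= s x) ->
  is_cexp P C1 s A -> is_cexp P C0 s B ->
  {ae P, forall x, `|U x - V x| <= A x + B x}.
Proof.
move=> Xs sA sB.
have le_s x : X x <= s x := le_trans (ler_norm _) (Xs x).
have Nle_s x : -1 * X x <= s x.
  by rewrite mulN1r (le_trans _ (Xs x)) // -normrN ler_norm.
have UA := is_cexp_le C1_meas XU sA le_s.
have NUA := is_cexp_le C1_meas (is_cexpZ C1_meas (-1) XU) sA Nle_s.
have VB := is_cexp_le C0_meas XV sB le_s.
have NVB := is_cexp_le C0_meas (is_cexpZ C0_meas (-1) XV) sB Nle_s.
have U_A : {ae P, forall x, U x <= A x /\ - U x <= A x}.
  by apply: (filterS2 _ _ UA NUA) => x u1 u2; rewrite -mulN1r.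
have V_B : {ae P, forall x, V x <= B x /\ - V x <= B x}.
  by apply: (filterS2 _ _ VB NVB) => x v1 v2; rewrite -mulN1r.
apply: (filterS2 _ _ U_A V_B) => x [u1 u2] [v1 v2].
by rewrite ler_norml; apply/andP; split; lra.
Qed.

Lemma cexp_increment_sqr_le (Z W e : T -> R) : (forall x, X x ^+ 2 <= Z x) ->
  is_cexp P C0 Z W -> is_cond_exp P <<s C0 >> (fun x => (U x - V x) ^+ 2) e ->
  {ae P, forall x, e x <= W x}.
Proof.
move=> XZ ZW [me ie ee].
have UV : is_cexp P C0 U V := is_cexp_tower C01 XV XU.
apply: (gen_measurable_ae_le C0_meas me (is_cexp_gen_measurable ZW) ie
  (is_cexp_integrable ZW)) => A GA.
have mA := sigma_gen_measurable C0_meas GA.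
rewrite ee //= (is_cexp_integral ZW GA).
apply: le_trans (integral_sqr_sub_cexp_le C0_meas UV GA) _.
have GA1 : <<s C1 >> A by exact: C01.
apply: le_trans (integral_sqr_cexp_le_sqr C1_meas XU GA1) _.
have [_ /integrable_EFin_measurable mX] := XU.
have [_ /integrable_EFin_measurable mZ] := ZW.
apply: ge0_le_integral_EFin => //; first exact: measurable_funX.
by move=> x; rewrite sqr_ge0.
Qed.

End cexp_increments.

Lemma in_index_iota (lo hi : nat) (Q : nat -> Prop) :
  (forall j, (lo <= j < hi)%N -> Q j) -> {in index_iota lo hi, forall j, Q j}.
Proof. by move=> hQ j; rewrite mem_index_iota; exact: hQ. Qed.

Lemma index_iota_window_range n m i : (1 <= i)%N ->
  {in index_iota i (minn (i + m) n.+1), forall j, (1 <= j <= n)%N}.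
Proof.
move=> i_ge1 j; rewrite mem_index_iota => /andP[ij jm].
by rewrite (leq_trans i_ge1 ij) -ltnS (leq_trans jm) // geq_minr.
Qed.

Lemma size_index_iota_window n m i :
  (size (index_iota i (minn (i + m) n.+1)) <= m)%N.
Proof. by rewrite size_iota leq_subLR geq_minl. Qed.

Section natural_filtration.
Context d (T : measurableType d) (R : realType) (H : normedModType R).
Variable eps : nat -> T -> H.

Definition filtration_gens (i : nat) : set (set T) :=
  [set A | exists j B, [/\ (1 <= j <= i)%N, borelH B & A = eps j @^-1` B]].

Lemma filtration_gens_measurable n i :
  (forall j, (1 <= j <= n)%N -> random_element (eps j)) -> (i <= n)%N ->
  filtration_gens i `<=` measurable.
Proof.
move=> eps_re i_le_n A [j [B [/andP[j_ge1 j_le_i] BB ->]]].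
by apply: eps_re => //; rewrite j_ge1 (leq_trans j_le_i i_le_n).
Qed.

Lemma natural_filtration_mono i k : (i <= k)%N ->
  <<s filtration_gens i >> `<=` <<s filtration_gens k >>.
Proof.
move=> ik; apply: sub_smallest2r; first exact: smallest_sigma_algebra.
move=> A [j [B [/andP[j_ge1 j_le_i] BB ->]]]; exists j, B; split => //.
by rewrite j_ge1 (leq_trans j_le_i ik).
Qed.

End natural_filtration.

Section window_sums.
Context d (T : measurableType d) (R : realType) (P : probability T R)
  (H : normedModType R).
Variables (D : set H) (eta : nat -> T -> H) (n : nat).
Hypotheses (D_countable : countable D) (D_dense : closure D = setT).
Hypothesis eta_borel : forall j, (1 <= j <= n)%N -> borel_measurable (eta j).
Hypothesis eta_L2 : forall j, (1 <= j <= n)%N ->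
  P.-integrable setT (EFin \o (fun x => `|eta j x| ^+ 2)).

Lemma integrable_norm_eta j : (1 <= j <= n)%N ->
  P.-integrable setT (EFin \o (fun x => `|eta j x|)).
Proof.
move=> jn; apply: (integrable_norm_dominated (eta_borel jn)
  (integrable_EFinD (finite_measure_integrable_cst P 1 measurableT) (eta_L2 jn))).
by move=> x /=; have := normr_ge0 (eta j x); nra.
Qed.

Lemma borel_measurable_sum_eta (s : seq nat) : {in s, forall j, (1 <= j <= n)%N} ->
  borel_measurable (fun x => \sum_(j <- s) eta j x).
Proof.
move=> sn; apply: (borel_measurable_sum D_countable D_dense) => j /sn.
exact: eta_borel.
Qed.

Lemma integrable_norm_sumB (s t : seq nat) :
  {in s, forall j, (1 <= j <= n)%N} -> {in t, forall j, (1 <= j <= n)%N} ->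
  P.-integrable setT (EFin \o (fun x =>
    `|\sum_(j <- s) eta j x - \sum_(j <- t) eta j x|)).
Proof.
move=> sn tn; pose g x := \sum_(j <- s) `|eta j x| + \sum_(j <- t) `|eta j x|.
apply: (@integrable_norm_dominated _ _ _ _ _ _ g).
- have -> : (fun x => \sum_(j <- s) eta j x - \sum_(j <- t) eta j x) =
            (fun x => \sum_(j <- s) eta j x + (-1) *: \sum_(j <- t) eta j x).
    by apply: funext => x; rewrite scaleN1r.
  apply: (borel_measurableD D_countable D_dense); first exact: borel_measurable_sum_eta.
  by apply: borel_measurableZ; exact: borel_measurable_sum_eta.
- by apply: integrable_EFinD; apply: integrable_EFin_sum => j;
    [move=> /sn|move=> /tn]; exact: integrable_norm_eta.
- by move=> x; apply: le_trans (ler_normB _ _) _; rewrite lerD ?ler_norm_sum.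
Qed.

Lemma integrable_norm_sum (s : seq nat) : {in s, forall j, (1 <= j <= n)%N} ->
  P.-integrable setT (EFin \o (fun x => `|\sum_(j <- s) eta j x|)).
Proof.
move=> sn; have nil_n : {in [::], forall j : nat, (1 <= j <= n)%N} by [].
apply: eq_integrable (integrable_norm_sumB sn nil_n) => // x _ /=.
by rewrite big_nil subr0.
Qed.

Lemma is_cexp_sum_norm (C : set (set T)) (s : seq nat) (a : nat -> T -> R) :
  C `<=` measurable -> {in s, forall j, (1 <= j <= n)%N} ->
  {in s, forall j, is_cond_exp P <<s C >> (fun x => `|eta j x|) (a j)} ->
  is_cexp P C (fun x => \sum_(j <- s) `|eta j x|) (fun x => \sum_(j <- s) a j x).
Proof.
move=> C_meas sn sa; apply: (is_cexp_sum C_meas) => j js.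
by split; [exact: sa|exact: integrable_norm_eta (sn j js)].
Qed.

Lemma is_cexp_sum_sqr_norm (C : set (set T)) (s : seq nat) (c : nat -> T -> R) :
  C `<=` measurable -> {in s, forall j, (1 <= j <= n)%N} ->
  {in s, forall j, is_cond_exp P <<s C >> (fun x => `|eta j x| ^+ 2) (c j)} ->
  is_cexp P C (fun x => \sum_(j <- s) `|eta j x| ^+ 2) (fun x => \sum_(j <- s) c j x).
Proof.
move=> C_meas sn sc; apply: (is_cexp_sum C_meas) => j js.
by split; [exact: sc|exact: eta_L2 (sn j js)].
Qed.

End window_sums.

Unset Implicit Arguments. Set Strict Implicit. Set Printing Implicit Defensive.

Theorem lemma2 (d : measure_display) (T : measurableType d) (R : realType)
  (P : probability T R) (H : completeNormedModType R)
  (n m i : nat) (eps : nat -> T -> H) (W : nat -> R)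
  (cS1 cS0 cT1 cT0 e : T -> R) (a b c : nat -> T -> R) :
  separable_hilbert H ->
  (forall j, (1 <= j <= n)%N -> random_element (eps j)) ->
  (forall j, (1 <= j <= n)%N ->
     P.-integrable [set: T] (fun x => (`|eps j x| ^+ 2)%:E)) ->
  (forall j, (1 <= j <= n)%N -> 0 <= W j) ->
  (1 <= m)%N -> (1 <= i <= n)%N ->
  let G := natural_filtration eps in
  let eta := fun j x => W j *: eps j x in
  let S := fun x => \sum_(1 <= j < n.+1) eta j x in
  let Ti := fun x => S x - \sum_(i <= j < minn (i + m) n.+1) eta j x in
  is_cond_exp P (G i) (fun x => `|S x|) cS1 ->
  is_cond_exp P (G i.-1) (fun x => `|S x|) cS0 ->
  is_cond_exp P (G i) (fun x => `|Ti x|) cT1 ->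
  is_cond_exp P (G i.-1) (fun x => `|Ti x|) cT0 ->
  let di := fun x => cS1 x - cS0 x - cT1 x + cT0 x in
  (forall j, (i <= j < minn (i + m) n.+1)%N ->
     is_cond_exp P (G i) (fun x => `|eta j x|) (a j)) ->
  (forall j, (i <= j < minn (i + m) n.+1)%N ->
     is_cond_exp P (G i.-1) (fun x => `|eta j x|) (b j)) ->
  (forall j, (i <= j < minn (i + m) n.+1)%N ->
     is_cond_exp P (G i.-1) (fun x => `|eta j x| ^+ 2) (c j)) ->
  is_cond_exp P (G i.-1) (fun x => di x ^+ 2) e ->
  {ae P, forall x,
     `|di x| <= \sum_(i <= j < minn (i + m) n.+1) a j x
              + \sum_(i <= j < minn (i + m) n.+1) b j x} /\
  {ae P, forall x,
     e x <= m%:R * \sum_(i <= j < minn (i + m) n.+1) c j x}.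
Proof.
move=> [_ [D [D_countable D_dense]]] eps_re eps_L2 _ _ /andP[i_ge1 i_le_n]
  G eta S Ti cS1E cS0E cT1E cT0E di aE bE cE eE.
have eta_borel j : (1 <= j <= n)%N -> borel_measurable (eta j).
  by move=> jn; apply/borel_measurableZ/random_element_borel_measurable/eps_re.
have eta_L2 j : (1 <= j <= n)%N ->
    P.-integrable setT (EFin \o (fun x => `|eta j x| ^+ 2)).
  by move=> jn; have := integrable_sqr_normZ (W j) (eps_L2 j jn).
have all_n : {in index_iota 1 n.+1, forall j, (1 <= j <= n)%N}.
  by move=> j; rewrite mem_index_iota.
have win_n := @index_iota_window_range n m i i_ge1.
have C1_meas := filtration_gens_measurable eps_re i_le_n.
have C0_meas := filtration_gens_measurable eps_re (leq_trans (leq_pred i) i_le_n).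
have C01 := natural_filtration_mono (eps := eps) (leq_pred i).
have iS : P.-integrable setT (EFin \o (fun x => `|S x|)).
  by have := integrable_norm_sum D_countable D_dense eta_borel eta_L2 all_n.
have iT : P.-integrable setT (EFin \o (fun x => `|Ti x|)).
  by have := integrable_norm_sumB D_countable D_dense eta_borel eta_L2 all_n win_n.
have XU := is_cexpB C1_meas (conj cS1E iS) (conj cT1E iT).
have XV := is_cexpB C0_meas (conj cS0E iS) (conj cT0E iT).
have Xs x : `| `|S x| - `|Ti x| | <= \sum_(i <= j < minn (i + m) n.+1) `|eta j x|.
  exact: norm_dist_sub_sum_le.
have diE x : di x = (cS1 x - cT1 x) - (cS0 x - cT0 x) by rewrite /di; ring.
split.
  have := cexp_increment_abs_le C0_meas C1_meas XU XV Xs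
    (is_cexp_sum_norm eta_borel eta_L2 C1_meas win_n (in_index_iota aE))
    (is_cexp_sum_norm eta_borel eta_L2 C0_meas win_n (in_index_iota bE)).
  by apply: filterS => x; rewrite diE.
apply: (cexp_increment_sqr_le C0_meas C1_meas C01 XU XV
  (fun x => sqr_le_mul_sum_sqr (Xs x) (@size_index_iota_window n m i))
  (is_cexpZ C0_meas m%:R
     (is_cexp_sum_sqr_norm eta_L2 C0_meas win_n (in_index_iota cE)))).
rewrite (_ : (fun x => _) = (fun x => di x ^+ 2)) //.
by apply: funext => x; rewrite diE.
Qed.
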